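(* Let $C_2\xrightarrow{\partial_2}C_1\xrightarrow{\partial_1}C_0$ be a 2-crossed module with Peiffer lifting $\{-,-\}$. Let $P_3\subseteq C_1$ be the (normal) subgroup generated by all $\langle\langle x,y\rangle,z\rangle$ and $\langle x,\langle y,z\rangle\rangle$, and $P_3'\subseteq C_2$ the (normal) subgroup generated by all $\{\langle x,y\rangle,z\}$ and $\{x,\langle y,z\rangle\}$, for $x,y,z\in C_1$, where $\langle x,y\rangle={}^{\partial_1x}y\,xy^{-1}x^{-1}$. Put $M=C_1/P_3$, $L=C_2/P_3'$, $N=C_0$, with quotient maps $q_1:C_1\to M$, $q_2:C_2\to L$. Then $\partial:M\to N$, $\partial(q_1x)=\partial_1x$, and $\delta:L\to M$, $\delta(q_2 l)=q_1\partial_2 l$, are well-defined homomorphisms ($\partial_1(P_3)=1$, $\partial_2(P_3')=P_3$); with $C=(M^{cr})^{ab}$ and $x\mapsto\bar x$ the quotient $M\to C$, the formula $\omega(\overline{q_1x}\otimes\overline{q_1y})=q_2\{x,y\}$ ($x,y\in C_1$) defines a homomorphism $\omega:C\otimes C\to L$, and, with the $N$-actions induced from those of the 2-crossed module, $(\omega,\delta,\partial)$, i.e. $C\otimes C\xrightarrow{\omega}L\xrightarrow{\delta}M\xrightarrow{\partial}N$, is a quadratic module.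
   Context: A 2-crossed module consists of a complex of groups $C_2\xrightarrow{\partial_2}C_1\xrightarrow{\partial_1}C_0$ ($\partial_1\partial_2=1$), actions of $C_0$ on $C_1$ and $C_2$ with $\partial_2,\partial_1$ equivariant ($C_0$ acting on itself by conjugation), and a $C_0$-equivariant function $\{-,-\}:C_1\times C_1\to C_2$ such that for $l,l'\in C_2$, $m,m',m''\in C_1$, $n\in C_0$: 2CM1 $\partial_2\{m,m'\}=({}^{\partial_1 m}m')mm'^{-1}m^{-1}$; 2CM2 $\{\partial_2 l,\partial_2 l'\}=[l',l]$; 2CM3 (i) $\{mm',m''\}={}^{\partial_1 m}\{m',m''\}\{m,m'm''m'^{-1}\}$, (ii) $\{m,m'm''\}=\{m,m'\}\,{}^{mm'm^{-1}}\{m,m''\}$ where ${}^{x}l:=\{\partial_2 l,x\}l$; 2CM4 $\{m,\partial_2 l\}\{\partial_2 l,m\}={}^{\partial_1 m}l\,l^{-1}$; 2CM5 ${}^{n}\{m,m'\}=\{{}^{n}m,{}^{n}m'\}$. A pre-crossed module is a homomorphism $\partial:M\to N$ with an $N$-action on $M$ such that $\partial({}^{n}m)=n\partial(m)n^{-1}$. Its Peiffer commutator is $\langle x,y\rangle={}^{\partial x}y\,xy^{-1}x^{-1}$; $P_2(\partial)$ is the subgroup generated by Peiffer commutators, $P_3(\partial)$ the subgroup generated by Peiffer commutators of length 3 ($\langle\langle x,y\rangle,z\rangle$, $\langle x,\langle y,z\rangle\rangle$). A nil(2)-module is a pre-crossed module with $P_3(\partial)=1$. $M^{cr}=M/P_2(\partial)$,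 $G^{ab}=G/[G,G]$, and $C=(M^{cr})^{ab}$; $C\otimes C$ is the tensor product of abelian groups. A quadratic module $(\omega,\delta,\partial)$ is a diagram of homomorphisms $C\otimes C\xrightarrow{\omega}L\xrightarrow{\delta}M\xrightarrow{\partial}N$ with $w:C\otimes C\to M$ such that: QM1 $\partial:M\to N$ is a nil(2)-module, $C=(M^{cr})^{ab}$, $x\mapsto\bar x$ the quotient $M\to C$, and $w(\bar x\otimes\bar y)=\langle x,y\rangle$; QM2 $\partial\delta=1$ and $\delta\omega=w$, i.e. $\delta\omega(\bar x\otimes\bar y)={}^{\partial x}y\,xy^{-1}x^{-1}$; QM3 $L$ is an $N$-group, all maps are $N$-equivariant, and ${}^{\partial x}a=\omega\big((\bar x\otimes\overline{\delta a})(\overline{\delta a}\otimes\bar x)\big)a$ for $a\in L$, $x\in M$; QM4 $\omega(\overline{\delta a}\otimes\overline{\delta b})=[b,a]$ for $a,b\in L$. *)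

Set Implicit Arguments.
Unset Strict Implicit.

Record group := Group {
  car :> Type;
  gmul : car -> car -> car;
  ginv : car -> car;
  gone : car;
  gmulA : forall x y z, gmul x (gmul y z) = gmul (gmul x y) z;
  gmul1g : forall x, gmul gone x = x;
  gmulVg : forall x, gmul (ginv x) x = gone }.

Arguments gmul {g} _ _.
Arguments ginv {g} _.
Arguments gone {g}.

Declare Scope grp_scope.
Delimit Scope grp_scope with grp.
Notation "x * y" := (gmul x y) (at level 40, left associativity) : grp_scope.
Notation "x ^-1" := (ginv x) (at level 3, left associativity, format "x ^-1") : grp_scope.
Notation "1" := gone : grp_scope.
Global Open Scope grp_scope.

Definition is_hom (G H : group) (f : G -> H) : Prop :=
  forall x y : G, f (x * y) = f x * f y.

Definition comm (G : group) (x y : G) : G := x * y * x^-1 * y^-1.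

Definition is_subgroup (G : group) (S : G -> Prop) : Prop :=
  S 1 /\ (forall x y, S x -> S y -> S (x * y)) /\ (forall x, S x -> S x^-1).

Definition gen (G : group) (S : G -> Prop) (x : G) : Prop :=
  forall H : G -> Prop, is_subgroup H -> (forall s, S s -> H s) -> H x.

Definition is_action (N G : group) (a : N -> G -> G) : Prop :=
  (forall x, a 1 x = x) /\ (forall n m x, a (n * m) x = a n (a m x)) /\
  (forall n, is_hom (a n)).

Definition is_quotient (G Q : group) (q : G -> Q) (K : G -> Prop) : Prop :=
  is_hom q /\ (forall y : Q, exists x, q x = y) /\ (forall x, q x = 1 <-> K x).

Definition abelian (G : group) : Prop := forall x y : G, x * y = y * x.

Definition bilinear (A B : group) (b : A -> A -> B) : Prop :=
  (forall x y z, b (x * y) z = b x z * b y z) /\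
  (forall x y z, b x (y * z) = b x y * b x z).

(* t : C x C -> T is the tensor product C (x) C of the abelian group C with
   itself, c (x) d := t c d (universal bilinear map into abelian groups) *)
Definition is_tensor_square (C T : group) (t : C -> C -> T) : Prop :=
  abelian T /\ bilinear t /\
  forall (A : group) (b : C -> C -> A), abelian A -> bilinear b ->
    exists! f : T -> A, is_hom f /\ forall c d, f (t c d) = b c d.

Definition commutators (G : group) (z : G) : Prop := exists x y, z = comm x y.

Section Peiffer.
Variables (N M : group) (d : M -> N) (a : N -> M -> M).

Definition peiffer (x y : M) : M := a (d x) y * x * y^-1 * x^-1.

Definition pre_crossed : Prop :=
  is_hom d /\ is_action a /\ forall n m, d (a n m) = n * d m * n^-1.

Definition peiffer_set (z : M) : Prop := exists x y, z = peiffer x y.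
Definition P2 : M -> Prop := gen peiffer_set.

Definition peiffer3_set (z : M) : Prop :=
  exists x y w, z = peiffer (peiffer x y) w \/ z = peiffer x (peiffer y w).
Definition P3 : M -> Prop := gen peiffer3_set.

Definition nil2_module : Prop := pre_crossed /\ forall x, P3 x -> x = 1.
End Peiffer.

Record two_crossed_module := TwoCrossedModule {
  C0 : group; C1 : group; C2 : group;
  d2 : C2 -> C1;
  d1 : C1 -> C0;
  act1 : C0 -> C1 -> C1;
  act2 : C0 -> C2 -> C2;
  lift : C1 -> C1 -> C2;
  d2_hom : is_hom d2;
  d1_hom : is_hom d1;
  d1d2 : forall l, d1 (d2 l) = 1;
  act1_action : is_action act1;
  act2_action : is_action act2;
  d1_equiv : forall n m, d1 (act1 n m) = n * d1 m * n^-1;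
  d2_equiv : forall n l, d2 (act2 n l) = act1 n (d2 l);
  CM1 : forall m m', d2 (lift m m') = act1 (d1 m) m' * m * m'^-1 * m^-1;
  CM2 : forall l l', lift (d2 l) (d2 l') = comm l' l;
  CM3i : forall m m' m'',
      lift (m * m') m'' = act2 (d1 m) (lift m' m'') * lift m (m' * m'' * m'^-1);
  CM3ii : forall m m' m'',
      lift m (m' * m'') =
      lift m m' * (lift (d2 (lift m m'')) (m * m' * m^-1) * lift m m'');
      (* ^{x} l := {d2 l, x} l with x = m m' m^-1, l = {m, m''} *)
  CM4 : forall m l, lift m (d2 l) * lift (d2 l) m = act2 (d1 m) l * l^-1;
  CM5 : forall n m m', act2 n (lift m m') = lift (act1 n m) (act1 n m') }.

Definition P3_1 (X : two_crossed_module) : C1 X -> Prop := P3 (@d1 X) (@act1 X).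

Definition P3'_set (X : two_crossed_module) (z : C2 X) : Prop :=
  exists x y w : C1 X,
    z = @lift X (peiffer (@d1 X) (@act1 X) x y) w \/
    z = @lift X x (peiffer (@d1 X) (@act1 X) y w).
Definition P3' (X : two_crossed_module) : C2 X -> Prop := gen (@P3'_set X).

(* Quadratic module  C(x)C --omega--> L --delta--> M --d--> N, where
   bar = r o p : M -> M^cr -> (M^cr)^ab = C, and t c c' = c (x) c'. *)
Definition is_quadratic_module (N M L Mcr C T : group)
  (d : M -> N) (actM : N -> M -> M) (delta : L -> M) (actL : N -> L -> L)
  (p : M -> Mcr) (r : Mcr -> C) (t : C -> C -> T) (omega : T -> L) : Prop :=
  let bar := fun x : M => r (p x) in
  nil2_module d actM /\
  is_quotient p (P2 d actM) /\ is_quotient r (gen (@commutators Mcr)) /\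
  is_tensor_square t /\
  exists w : T -> M,
    is_hom w /\ (forall x y, w (t (bar x) (bar y)) = peiffer d actM x y) /\
    is_hom delta /\ is_hom omega /\
    (forall l, d (delta l) = 1) /\ (forall u, delta (omega u) = w u) /\
    is_action actL /\
    (exists (actC : N -> C -> C) (actT : N -> T -> T),
       is_action actC /\ (forall n x, actC n (bar x) = bar (actM n x)) /\
       is_action actT /\
       (forall n c c', actT n (t c c') = t (actC n c) (actC n c')) /\
       (forall n u, omega (actT n u) = actL n (omega u)) /\
       (forall n u, w (actT n u) = actM n (w u))) /\
    (forall n l, delta (actL n l) = actM n (delta l)) /\
    (forall (x : M) (a : L),
       actL (d x) a = omega (t (bar x) (bar (delta a)) * t (bar (delta a)) (bar x)) * a) /\
    (forall a b : L, omega (t (bar (delta a)) (bar (delta b))) = comm b a).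

From Stdlib Require Import ProofIrrelevance IndefiniteDescription.
Set Implicit Arguments.
Unset Strict Implicit.

(* Modulo P3' the Peiffer lifting {x, y} becomes central (2CM2 rewrites a commutator
   [l, {x, y}] as {d2 l, <x, y>}) and bilinear (the error terms of 2CM3 and 2CM4 are
   liftings with a Peiffer commutator as one argument).  A central bilinear map kills
   Peiffer commutators and commutators in each variable, so {-, -} factors through
   C x C, where C = C1 / P2(d1)[C1, C1], and then through the tensor square.  Every
   axiom of the quadratic module is the image of a 2-crossed module axiom under the
   quotient maps: QM2 of 2CM1, QM3 of 2CM4 and 2CM5, QM4 of 2CM2. *)

Section GroupLemmas.
Variable G : group.
Implicit Types x y z : G.

Lemma mulgV x : x * x^-1 = 1.
Proof.
  rewrite <- (gmul1g (x * x^-1)), <- (gmulVg x^-1) at 1.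
  rewrite <- gmulA, (gmulA x^-1 x), gmulVg, gmul1g.
  apply gmulVg.
Qed.

Lemma mulg1 x : x * 1 = x.
Proof. rewrite <- (gmulVg x), gmulA, mulgV, gmul1g. reflexivity. Qed.

Lemma mulKg x y : x^-1 * (x * y) = y.
Proof. rewrite gmulA, gmulVg, gmul1g. reflexivity. Qed.

Lemma mulVKg x y : x * (x^-1 * y) = y.
Proof. rewrite gmulA, mulgV, gmul1g. reflexivity. Qed.

Lemma mulgK x y : x * y * y^-1 = x.
Proof. rewrite <- gmulA, mulgV, mulg1. reflexivity. Qed.

Lemma mulgVK x y : x * y^-1 * y = x.
Proof. rewrite <- gmulA, gmulVg, mulg1. reflexivity. Qed.

Lemma mulgI x y z : z * x = z * y -> x = y.
Proof. intro e. rewrite <- (mulKg z x), e, mulKg. reflexivity. Qed.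

Lemma eq_invg_mul x y : x * y = 1 -> x^-1 = y.
Proof. intro e. rewrite <- (mulg1 x^-1), <- e, mulKg. reflexivity. Qed.

Lemma invg1 : (1 : G)^-1 = 1.
Proof. apply eq_invg_mul, gmul1g. Qed.

Lemma eq_mulgV1 x y : x * y^-1 = 1 -> x = y.
Proof. intro e. rewrite <- (mulgVK x y), e, gmul1g. reflexivity. Qed.

Lemma comm1_commute x y : comm x y = 1 -> x * y = y * x.
Proof. intro e. apply eq_mulgV1 in e. rewrite <- (mulgVK (x * y) x), e. reflexivity. Qed.

Lemma commute_comm1 x y : x * y = y * x -> comm x y = 1.
Proof. unfold comm. intro e. rewrite e, mulgK, mulgV. reflexivity. Qed.

End GroupLemmas.

Section Homomorphisms.
Variables (G H : group) (f : G -> H).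
Hypothesis hf : is_hom f.

Lemma hom1 : f 1 = 1.
Proof. apply (mulgI (z := f 1)). rewrite <- hf, gmul1g, mulg1. reflexivity. Qed.

Lemma homV x : f x^-1 = (f x)^-1.
Proof. symmetry. apply eq_invg_mul. rewrite <- hf, mulgV. apply hom1. Qed.

Lemma hom_comm x y : f (comm x y) = comm (f x) (f y).
Proof. unfold comm. rewrite !hf, !homV. reflexivity. Qed.

Lemma hom_eq_ker x y : f (x * y^-1) = 1 -> f x = f y.
Proof. rewrite hf, homV. apply eq_mulgV1. Qed.

End Homomorphisms.

Lemma hom_comp (G H K : group) (f : G -> H) (g : H -> K) :
  is_hom f -> is_hom g -> is_hom (fun x => g (f x)).
Proof. intros hf hg x y. rewrite hf, hg. reflexivity. Qed.

Section Subgroups.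
Variable G : group.
Implicit Types (x y : G) (S T : G -> Prop).

Lemma gen_in S x : S x -> gen S x.
Proof. intros Sx H _ SH. auto. Qed.

Lemma gen_ind S (H : G -> Prop) :
  is_subgroup H -> (forall s, S s -> H s) -> forall x, gen S x -> H x.
Proof. intros sgH SH x Sx. apply Sx; auto. Qed.

Lemma gen_subgroup S : is_subgroup (gen S).
Proof.
  split; [|split].
  - intros H [H1 _] _. exact H1.
  - intros x y Sx Sy H sgH SH. apply sgH; [apply Sx | apply Sy]; auto.
  - intros x Sx H sgH SH. apply sgH, Sx; auto.
Qed.

Lemma gen_mono S T : (forall s, S s -> T s) -> forall x, gen S x -> gen T x.
Proof. intro ST. apply gen_ind; [apply gen_subgroup | intros; apply gen_in; auto]. Qed.

End Subgroups.

Section SubgroupsHom.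
Variables (G H : group) (f : G -> H).
Hypothesis hf : is_hom f.

Lemma kernel_subgroup : is_subgroup (fun x => f x = 1).
Proof.
  split; [|split].
  - apply hom1, hf.
  - intros x y fx fy. rewrite hf, fx, fy. apply gmul1g.
  - intros x fx. rewrite (homV hf), fx. apply invg1.
Qed.

Lemma preimage_subgroup (S : H -> Prop) : is_subgroup S -> is_subgroup (fun x => S (f x)).
Proof.
  intros [S1 [SM SV]]. split; [|split].
  - rewrite (hom1 hf). exact S1.
  - intros x y Sx Sy. rewrite hf. auto.
  - intros x Sx. rewrite (homV hf). auto.
Qed.

Lemma image_subgroup (S : G -> Prop) :
  is_subgroup S -> is_subgroup (fun y => exists x, S x /\ f x = y).
Proof.
  intros [S1 [SM SV]]. split; [|split].
  - exists 1. split; [exact S1 | apply hom1, hf].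
  - intros y y' [x [Sx <-]] [x' [Sx' <-]]. exists (x * x'). split; auto.
  - intros y [x [Sx <-]]. exists x^-1. split; [auto | apply homV, hf].
Qed.

Lemma gen_image (S : G -> Prop) (T : H -> Prop) :
  (forall s, S s -> T (f s)) -> forall x, gen S x -> gen T (f x).
Proof.
  intro ST. apply gen_ind.
  - apply preimage_subgroup, gen_subgroup.
  - intros s Ss. apply gen_in; auto.
Qed.

End SubgroupsHom.
Section Quotient.
Variables (G Q : group) (q : G -> Q) (K : G -> Prop).
Hypothesis hq : is_quotient q K.

Lemma quot_hom : is_hom q.
Proof. apply hq. Qed.

Lemma quot_surj y : exists x, q x = y.
Proof. apply hq. Qed.

Lemma quot_kerP x : q x = 1 <-> K x.
Proof. apply hq. Qed.

Lemma quot_ker x : K x -> q x = 1.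
Proof. apply quot_kerP. Qed.

Lemma quot_eq_ker x y : q x = q y -> K (x * y^-1).
Proof. intro e. apply quot_kerP. rewrite quot_hom, (homV quot_hom), e. apply mulgV. Qed.

Lemma quot_saturated (S : G -> Prop) : is_subgroup S -> (forall k, K k -> S k) ->
  forall x y, q x = q y -> S y -> S x.
Proof.
  intros [_ [SM _]] KS x y e Sy. rewrite <- (mulgVK x y). apply SM; auto.
  apply KS, quot_eq_ker, e.
Qed.

Lemma quot_factor (H : group) (f : G -> H) : is_hom f -> (forall k, K k -> f k = 1) ->
  forall x y, q x = q y -> f x = f y.
Proof. intros hf fK x y e. apply (hom_eq_ker hf), fK, quot_eq_ker, e. Qed.

Definition quot_sect (y : Q) : G :=
  proj1_sig (constructive_indefinite_description _ (quot_surj y)).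

Lemma quot_sectK y : q (quot_sect y) = y.
Proof. exact (proj2_sig (constructive_indefinite_description _ (quot_surj y))). Qed.

Lemma quot_ind (P : Q -> Prop) : (forall x, P (q x)) -> forall y, P y.
Proof. intros Pq y. rewrite <- (quot_sectK y). apply Pq. Qed.

Lemma quot_image_subgroup (S : G -> Prop) : is_subgroup S -> (forall k, K k -> S k) ->
  is_subgroup (fun y => forall x, q x = y -> S x).
Proof.
  intros sgS KS. pose proof sgS as [S1 [SM SV]]. split; [|split].
  - intros x e. apply (quot_saturated sgS KS) with (y := 1); auto.
    rewrite e. symmetry. apply hom1, quot_hom.
  - intros u v Su Sv z e.
    destruct (quot_surj u) as [x <-], (quot_surj v) as [y <-].
    rewrite <- quot_hom in e. apply (quot_saturated sgS KS e). auto.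
  - intros u Su z e. destruct (quot_surj u) as [x <-].
    rewrite <- (homV quot_hom) in e. apply (quot_saturated sgS KS e). auto.
Qed.

Lemma quot_gen_preimage (S : G -> Prop) (T : Q -> Prop) :
  is_subgroup S -> (forall k, K k -> S k) -> (forall x, T (q x) -> S x) ->
  forall x, gen T (q x) -> S x.
Proof.
  intros sgS KS TS x Tx.
  apply (@gen_ind _ T (fun y => forall x, q x = y -> S x)) with (x := q x); auto.
  - apply quot_image_subgroup; auto.
  - intros y Ty z <-. auto.
Qed.

Section Descent.
Variables (H : group) (f : G -> H).
Hypotheses (hf : is_hom f) (fK : forall k, K k -> f k = 1).

Definition quot_desc (y : Q) : H := f (quot_sect y).

Lemma quot_descE x : quot_desc (q x) = f x.
Proof.
  apply (quot_factor hf fK), quot_sectK.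
Qed.

Lemma quot_desc_hom : is_hom quot_desc.
Proof.
  intros u v. destruct (quot_surj u) as [x <-], (quot_surj v) as [y <-].
  rewrite <- quot_hom, !quot_descE. apply hf.
Qed.

End Descent.

Section ActionDescent.
Variables (N : group) (a : N -> G -> G).
Hypotheses (ha : is_action a) (aK : forall n k, K k -> K (a n k)).

Definition quot_act (n : N) : Q -> Q := quot_desc (fun x => q (a n x)).

Lemma quot_actE n x : quot_act n (q x) = q (a n x).
Proof.
  apply (quot_descE (f := fun y => q (a n y))).
  - apply hom_comp; [apply ha | apply quot_hom].
  - intros k Kk. apply quot_ker, aK, Kk.
Qed.

Lemma quot_act_action : is_action quot_act.
Proof.
  pose proof ha as [a1 [aM ahom]]. split; [|split].
  - apply quot_ind. intro x. rewrite quot_actE, a1. reflexivity.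
  - intros n m. apply quot_ind. intro x. rewrite !quot_actE, aM. reflexivity.
  - intros n u v. destruct (quot_surj u) as [x <-], (quot_surj v) as [y <-].
    rewrite <- quot_hom, !quot_actE, ahom. apply quot_hom.
Qed.

End ActionDescent.

End Quotient.

Lemma hom_surj_quotient (G Q : group) (f : G -> Q) :
  is_hom f -> (forall y, exists x, f x = y) -> is_quotient f (fun x => f x = 1).
Proof. intros hf sf. split; [exact hf | split; [exact sf | reflexivity]]. Qed.

Lemma abelianization_abelian (G A : group) (r : G -> A) :
  is_quotient r (gen (@commutators G)) -> abelian A.
Proof.
  intros hr u v. destruct (quot_surj hr u) as [x <-], (quot_surj hr v) as [y <-].
  apply comm1_commute. rewrite <- (hom_comm (quot_hom hr)).
  apply (quot_ker hr), gen_in. exists x, y. reflexivity.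
Qed.

Definition central (G : group) (x : G) : Prop := forall y, x * y = y * x.

Section Center.
Variable G : group.

Lemma central1 : central (1 : G).
Proof. intro y. rewrite gmul1g, mulg1. reflexivity. Qed.

Lemma centralM (x y : G) : central x -> central y -> central (x * y).
Proof. intros cx cy z. rewrite <- gmulA, cy, gmulA, cx, gmulA. reflexivity. Qed.

Lemma centralV (x : G) : central x -> central x^-1.
Proof. intros cx z. apply (mulgI (z := x)). rewrite mulVKg, gmulA, cx, mulgK. reflexivity. Qed.

Definition center_elt := {x : G | central x}.

Lemma center_elt_eq (a b : center_elt) : proj1_sig a = proj1_sig b -> a = b.
Proof. destruct a, b; simpl. intros <-. f_equal. apply proof_irrelevance. Qed.

Definition center_group : group.
Proof.
  refine (@Group center_elt
    (fun a b => exist _ _ (centralM (proj2_sig a) (proj2_sig b)))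
    (fun a => exist _ _ (centralV (proj2_sig a)))
    (exist _ _ central1) _ _ _); intros; apply center_elt_eq; simpl.
  - apply gmulA.
  - apply gmul1g.
  - apply gmulVg.
Defined.

Lemma center_group_abelian : abelian center_group.
Proof. intros [x cx] [y cy]. apply center_elt_eq. apply cx. Qed.

End Center.

Lemma bilinear_hom (C C' T : group) (t : C' -> C' -> T) (f : C -> C') :
  bilinear t -> is_hom f -> bilinear (fun c d => t (f c) (f d)).
Proof. intros [tl tr] hf. split; intros; rewrite hf; auto. Qed.

Section TensorSquare.
Variables (C T : group) (t : C -> C -> T).
Hypothesis ht : is_tensor_square t.

(* The universal property only concerns abelian targets; a bilinear map with
   central values is handled by corestricting it to the centre. *)
Section CentralLift.
Variables (L : group) (b : C -> C -> L).
Hypotheses (hb : bilinear b) (bc : forall c d, central (b c d)).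

Lemma tensor_lift_ex :
  exists f : T -> L, is_hom f /\ (forall c d, f (t c d) = b c d) /\ (forall u, central (f u)).
Proof.
  destruct ht as [_ [_ univ]], hb as [bl br].
  destruct (univ (center_group L) (fun c d => exist _ (b c d) (bc c d)) (@center_group_abelian L))
    as [f [[hf ft] _]].
  - split; intros; apply center_elt_eq; simpl; auto.
  - exists (fun u => proj1_sig (f u)). split; [|split].
    + intros u v. rewrite hf. reflexivity.
    + intros c d. rewrite ft. reflexivity.
    + intro u. exact (proj2_sig (f u)).
Qed.

Definition tensor_lift : T -> L := proj1_sig (constructive_indefinite_description _ tensor_lift_ex).

Lemma tensor_lift_spec :
  is_hom tensor_lift /\ (forall c d, tensor_lift (t c d) = b c d) /\
  (forall u, central (tensor_lift u)).
Proof. exact (proj2_sig (constructive_indefinite_description _ tensor_lift_ex)). Qed.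

End CentralLift.

Lemma tensor_hom_ext (L : group) (g1 g2 : T -> L) : is_hom g1 -> is_hom g2 ->
  (forall u, central (g1 u)) -> (forall u, central (g2 u)) ->
  (forall c d, g1 (t c d) = g2 (t c d)) -> forall u, g1 u = g2 u.
Proof.
  intros h1 h2 c1 c2 e u.
  destruct ht as [_ [[tl tr] univ]].
  pose (G1 := fun u => exist _ (g1 u) (c1 u) : center_group L).
  pose (G2 := fun u => exist _ (g2 u) (c2 u) : center_group L).
  destruct (univ (center_group L) (fun c d => G1 (t c d)) (@center_group_abelian L))
    as [f [_ f_unique]].
  { split; intros; apply center_elt_eq; simpl; rewrite ?tl, ?tr, h1; reflexivity. }
  assert (fG1 : f = G1).
  { apply f_unique. split; [intros v w; apply center_elt_eq, h1 | reflexivity]. }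
  assert (fG2 : f = G2).
  { apply f_unique. split; [intros v w; apply center_elt_eq, h2 |].
    intros; apply center_elt_eq; symmetry; apply e. }
  exact (f_equal (fun g => proj1_sig (g u)) (eq_trans (eq_sym fG1) fG2)).
Qed.

Lemma tensor_central (u : T) : central u.
Proof. intro v. apply ht. Qed.

End TensorSquare.

Section Actions.
Variables (N G : group) (a : N -> G -> G).
Hypothesis ha : is_action a.

Lemma act_hom n : is_hom (a n).
Proof. apply ha. Qed.

Lemma act_comp n m x : a (n * m) x = a n (a m x).
Proof. apply ha. Qed.

Lemma act_one x : a 1 x = x.
Proof. apply ha. Qed.

Lemma act_central n z : central z -> central (a n z).
Proof.
  intros cz y. assert (ay : a n (a n^-1 y) = y) by (rewrite <- act_comp, mulgV; apply act_one).
  rewrite <- ay, <- !act_hom, cz. reflexivity.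
Qed.

End Actions.

Section PreCrossed.
Variables (N M : group) (d : M -> N) (a : N -> M -> M).
Hypothesis hpc : pre_crossed d a.

Lemma peiffer_d x y : d (peiffer d a x y) = 1.
Proof.
  destruct hpc as [hd [_ d_equiv]]. unfold peiffer.
  rewrite !hd, !(homV hd), d_equiv, <- !gmulA, mulKg, mulVKg. apply mulgV.
Qed.

Lemma act_peiffer n x y : a n (peiffer d a x y) = peiffer d a (a n x) (a n y).
Proof.
  destruct hpc as [_ [ha d_equiv]]. unfold peiffer.
  rewrite !(act_hom ha n), !(homV (act_hom ha n)), d_equiv, <- !(act_comp ha), mulgVK.
  reflexivity.
Qed.

End PreCrossed.

Lemma peiffer_morph (N M M' : group) (d : M -> N) (a : N -> M -> M)
    (d' : M' -> N) (a' : N -> M' -> M') (f : M -> M') :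
  is_hom f -> (forall x, d' (f x) = d x) -> (forall n x, a' n (f x) = f (a n x)) ->
  forall x y, f (peiffer d a x y) = peiffer d' a' (f x) (f y).
Proof. intros hf fd fa x y. unfold peiffer. rewrite !hf, !(homV hf), fd, fa. reflexivity. Qed.

Section TwoCrossedModule.
Variable X : two_crossed_module.
Notation pf := (peiffer (@d1 X) (@act1 X)).

Lemma two_crossed_pre_crossed : pre_crossed (@d1 X) (@act1 X).
Proof. split; [apply d1_hom | split; [apply act1_action | apply d1_equiv]]. Qed.

Lemma d2_lift x y : d2 (lift x y) = pf x y.
Proof. exact (CM1 x y). Qed.

Lemma act_peiffer1 n x y : act1 n (pf x y) = pf (act1 n x) (act1 n y).
Proof. apply act_peiffer, two_crossed_pre_crossed. Qed.

Lemma P3_d1 x : @P3_1 X x -> d1 x = 1.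
Proof.
  apply (@gen_ind _ _ (fun x => d1 x = 1)); [apply kernel_subgroup, d1_hom |].
  intros s [x0 [y0 [w0 [-> | ->]]]]; apply peiffer_d, two_crossed_pre_crossed.
Qed.

Lemma P3'_d2 l : @P3' X l -> @P3_1 X (d2 l).
Proof.
  apply (gen_image (f := @d2 X)); [apply d2_hom |].
  intros s [x0 [y0 [w0 [-> | ->]]]]; rewrite d2_lift; exists x0, y0, w0; auto.
Qed.

Lemma P3_d2_image x : @P3_1 X x -> exists l, @P3' X l /\ d2 l = x.
Proof.
  apply (@gen_ind _ _ (fun x => exists l, @P3' X l /\ d2 l = x)); [apply image_subgroup; [apply d2_hom | apply gen_subgroup] |].
  intros s [x0 [y0 [w0 [-> | ->]]]]; eexists; (split; [apply gen_in | apply d2_lift]);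
    exists x0, y0, w0; auto.
Qed.

Lemma P3_act n x : @P3_1 X x -> @P3_1 X (act1 n x).
Proof.
  apply (gen_image (f := @act1 X n)); [apply act_hom, act1_action |].
  intros s [x0 [y0 [w0 [-> | ->]]]]; rewrite !act_peiffer1; do 3 eexists; eauto.
Qed.

Lemma P3'_act n l : @P3' X l -> @P3' X (act2 n l).
Proof.
  apply (gen_image (f := @act2 X n)); [apply act_hom, act2_action |].
  intros s [x0 [y0 [w0 [-> | ->]]]]; rewrite CM5, !act_peiffer1; do 3 eexists; eauto.
Qed.

(* P2(d1) [C1, C1], the kernel of C1 -> C. *)
Definition P2_comm : C1 X -> Prop := gen (fun z => peiffer_set (@d1 X) (@act1 X) z \/ commutators z).

Lemma P3_P2_comm x : @P3_1 X x -> P2_comm x.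
Proof. apply gen_mono. intros s [x0 [y0 [w0 [-> | ->]]]]; left; do 2 eexists; reflexivity. Qed.

Lemma P2_comm_act n x : P2_comm x -> P2_comm (act1 n x).
Proof.
  apply (gen_image (f := @act1 X n)); [apply act_hom, act1_action |].
  intros s [[x0 [y0 ->]] | [x0 [y0 ->]]].
  - left. rewrite act_peiffer1. do 2 eexists. reflexivity.
  - right. rewrite (hom_comm (act_hom (act1_action X) n)). do 2 eexists. reflexivity.
Qed.

Lemma P2_comm_ker (L : group) (h : C1 X -> L) : is_hom h ->
  (forall x y, h (pf x y) = 1) -> (forall x, central (h x)) ->
  forall z, P2_comm z -> h z = 1.
Proof.
  intros hh hpf hc. apply (@gen_ind _ _ (fun z => h z = 1)); [apply kernel_subgroup, hh |].
  intros s [[x [y ->]] | [x [y ->]]]; [apply hpf |].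
  rewrite (hom_comm hh). apply commute_comm1, hc.
Qed.

End TwoCrossedModule.

Section Quotients.
Variables (X : two_crossed_module) (M L : group) (q1 : C1 X -> M) (q2 : C2 X -> L).
Hypotheses (hq1 : is_quotient q1 (@P3_1 X)) (hq2 : is_quotient q2 (@P3' X)).
Notation pf := (peiffer (@d1 X) (@act1 X)).

Lemma q2_lift_peifferl x y w : q2 (lift (pf x y) w) = 1.
Proof. apply (quot_ker hq2), gen_in. exists x, y, w. auto. Qed.

Lemma q2_lift_peifferr x y w : q2 (lift x (pf y w)) = 1.
Proof. apply (quot_ker hq2), gen_in. exists x, y, w. auto. Qed.

Lemma q2_lift_central x y : central (q2 (lift x y)).
Proof.
  intro u. destruct (quot_surj hq2 u) as [l <-]. apply comm1_commute.
  rewrite <- (hom_comm (quot_hom hq2)), <- CM2, d2_lift. apply q2_lift_peifferr.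
Qed.

Lemma q2_liftMr x y z : q2 (lift x (y * z)) = q2 (lift x y) * q2 (lift x z).
Proof. rewrite CM3ii, !(quot_hom hq2), d2_lift, q2_lift_peifferl, gmul1g. reflexivity. Qed.

Lemma q2_liftr_hom x : is_hom (fun y => q2 (lift x y)).
Proof. intros y z. apply q2_liftMr. Qed.

Lemma q2_lift_act_d1 x y z : q2 (act2 (d1 x) (lift y z)) = q2 (lift y z).
Proof.
  apply (hom_eq_ker (quot_hom hq2)).
  rewrite <- CM4, (quot_hom hq2), !d2_lift, q2_lift_peifferl, q2_lift_peifferr. apply gmul1g.
Qed.

Lemma q2_liftMl x y z : q2 (lift (x * y) z) = q2 (lift x z) * q2 (lift y z).
Proof.
  rewrite CM3i, (quot_hom hq2), q2_lift_act_d1, !q2_liftMr.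
  rewrite (homV (q2_liftr_hom x)), (q2_lift_central x y), mulgK.
  apply q2_lift_central.
Qed.

Lemma q2_liftl_hom y : is_hom (fun x => q2 (lift x y)).
Proof. intros x z. apply q2_liftMl. Qed.

Lemma q2_lift_P2_comm z y : P2_comm z -> q2 (lift z y) = 1 /\ q2 (lift y z) = 1.
Proof.
  intro hz. split; revert z hz.
  - apply P2_comm_ker; [apply q2_liftl_hom | intros; apply q2_lift_peifferl | intro; apply q2_lift_central].
  - apply P2_comm_ker; [apply q2_liftr_hom | intros; apply q2_lift_peifferr | intro; apply q2_lift_central].
Qed.

Definition dM : M -> C0 X := quot_desc hq1 (@d1 X).
Definition delta : L -> M := quot_desc hq2 (fun l => q1 (d2 l)).
Definition actM : C0 X -> M -> M := quot_act hq1 (@act1 X).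
Definition actL : C0 X -> L -> L := quot_act hq2 (@act2 X).

Lemma dM_q1 x : dM (q1 x) = d1 x.
Proof. apply quot_descE; [apply d1_hom | apply P3_d1]. Qed.

Lemma dM_hom : is_hom dM.
Proof. apply quot_desc_hom; [apply d1_hom | apply P3_d1]. Qed.

Lemma delta_q2 l : delta (q2 l) = q1 (d2 l).
Proof.
  apply (quot_descE hq2 (f := fun l => q1 (d2 l))); [apply hom_comp; [apply d2_hom | apply hq1] |].
  intros k hk. apply (quot_ker hq1), P3'_d2, hk.
Qed.

Lemma delta_hom : is_hom delta.
Proof.
  apply quot_desc_hom; [apply hom_comp; [apply d2_hom | apply hq1] |].
  intros k hk. apply (quot_ker hq1), P3'_d2, hk.
Qed.

Lemma actM_q1 n x : actM n (q1 x) = q1 (act1 n x).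
Proof. apply quot_actE; [apply act1_action | apply P3_act]. Qed.

Lemma actM_action : is_action actM.
Proof. apply quot_act_action; [apply act1_action | apply P3_act]. Qed.

Lemma actL_q2 n l : actL n (q2 l) = q2 (act2 n l).
Proof. apply quot_actE; [apply act2_action | apply P3'_act]. Qed.

Lemma actL_action : is_action actL.
Proof. apply quot_act_action; [apply act2_action | apply P3'_act]. Qed.

Lemma peiffer_q1 x y : peiffer dM actM (q1 x) (q1 y) = q1 (pf x y).
Proof. symmetry. apply peiffer_morph; [apply hq1 | apply dM_q1 | apply actM_q1]. Qed.

Lemma dM_delta l : dM (delta l) = 1.
Proof. destruct (quot_surj hq2 l) as [l' <-]. rewrite delta_q2, dM_q1. apply d1d2. Qed.

Lemma delta_equiv n l : delta (actL n l) = actM n (delta l).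
Proof.
  destruct (quot_surj hq2 l) as [l' <-].
  rewrite actL_q2, !delta_q2, actM_q1, d2_equiv. reflexivity.
Qed.

Lemma quotient_pre_crossed : pre_crossed dM actM.
Proof.
  split; [apply dM_hom | split; [apply actM_action |]].
  intros n m. destruct (quot_surj hq1 m) as [x <-].
  rewrite actM_q1, !dM_q1. apply d1_equiv.
Qed.

Lemma quotient_nil2 : nil2_module dM actM.
Proof.
  split; [exact quotient_pre_crossed |].
  apply (@gen_ind _ _ (fun m => m = 1)).
  - split; [reflexivity | split; [intros ? ? -> ->; apply gmul1g | intros ? ->; apply invg1]].
  - intros s [a [b [c [-> | ->]]]];
      destruct (quot_surj hq1 a) as [x <-], (quot_surj hq1 b) as [y <-],
        (quot_surj hq1 c) as [z <-];
      rewrite !peiffer_q1; apply (quot_ker hq1), gen_in; exists x, y, z; auto.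
Qed.

Section Abelianization.
Variables (Mcr C T : group) (p : M -> Mcr) (r : Mcr -> C) (t : C -> C -> T).
Hypotheses (hp : is_quotient p (P2 dM actM)) (hr : is_quotient r (gen (@commutators Mcr)))
  (ht : is_tensor_square t).

Definition bar (m : M) : C := r (p m).
Definition barq (x : C1 X) : C := bar (q1 x).

Lemma bar_hom : is_hom bar.
Proof. exact (hom_comp (quot_hom hp) (quot_hom hr)). Qed.

Lemma barq_hom : is_hom barq.
Proof. exact (hom_comp (quot_hom hq1) bar_hom). Qed.

Lemma P2_comm_barq z : P2_comm z -> barq z = 1.
Proof.
  apply P2_comm_ker; [apply barq_hom | | intros x y; apply (abelianization_abelian hr)].
  intros x y. unfold barq, bar. rewrite <- peiffer_q1, (quot_ker hp).
  - apply hom1, hr.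
  - apply gen_in. do 2 eexists. reflexivity.
Qed.

Lemma pq1_ker_P2_comm z : p (q1 z) = 1 -> P2_comm z.
Proof.
  intro e. apply (quot_gen_preimage hq1 (T := peiffer_set dM actM)).
  - apply gen_subgroup.
  - apply P3_P2_comm.
  - intros x [a [b e']].
    destruct (quot_surj hq1 a) as [y <-], (quot_surj hq1 b) as [w <-].
    rewrite peiffer_q1 in e'.
    apply (quot_saturated hq1 (gen_subgroup _) (@P3_P2_comm X) e').
    apply gen_in. left. do 2 eexists. reflexivity.
  - apply (quot_kerP hp), e.
Qed.

Lemma barq_P2_comm z : barq z = 1 -> P2_comm z.
Proof.
  assert (hpq : is_quotient (fun x => p (q1 x)) (fun x => p (q1 x) = 1)).
  { apply hom_surj_quotient; [apply hom_comp; [apply hq1 | apply hp] |].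
    intro u. destruct (quot_surj hp u) as [m <-], (quot_surj hq1 m) as [x <-]. eauto. }
  intro e. apply (quot_gen_preimage hpq (T := @commutators Mcr)).
  - apply gen_subgroup.
  - exact pq1_ker_P2_comm.
  - intros x [u [v e']].
    destruct (quot_surj hpq u) as [a <-], (quot_surj hpq v) as [b <-].
    rewrite <- (hom_comm (quot_hom hpq)) in e'.
    apply (quot_saturated hpq (gen_subgroup _) pq1_ker_P2_comm e').
    apply gen_in. right. do 2 eexists. reflexivity.
  - apply (quot_kerP hr), e.
Qed.

Lemma barq_quotient : is_quotient barq (@P2_comm X).
Proof.
  split; [apply barq_hom | split].
  - intro c. destruct (quot_surj hr c) as [u <-], (quot_surj hp u) as [m <-],
      (quot_surj hq1 m) as [x <-]. exists x. reflexivity.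
  - intro z. split; [apply barq_P2_comm | apply P2_comm_barq].
Qed.

Definition lift_bar (c c' : C) : L :=
  q2 (lift (quot_sect barq_quotient c) (quot_sect barq_quotient c')).

Lemma lift_barE x y : lift_bar (barq x) (barq y) = q2 (lift x y).
Proof.
  unfold lift_bar.
  rewrite (quot_factor barq_quotient (f := fun z => q2 (lift z _)) (q2_liftl_hom _)
             (fun k hk => proj1 (q2_lift_P2_comm _ hk)) (quot_sectK _ _)).
  apply (quot_factor barq_quotient (f := fun z => q2 (lift x z)) (q2_liftr_hom _)
           (fun k hk => proj2 (q2_lift_P2_comm x hk)) (quot_sectK _ _)).
Qed.

Lemma lift_bar_bilinear : bilinear lift_bar.
Proof.
  split; intros c c' c'';
    destruct (quot_surj barq_quotient c) as [x <-], (quot_surj barq_quotient c') as [y <-],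
      (quot_surj barq_quotient c'') as [z <-];
    rewrite <- barq_hom, !lift_barE; [apply q2_liftMl | apply q2_liftMr].
Qed.

Lemma lift_bar_central c c' : central (lift_bar c c').
Proof. apply q2_lift_central. Qed.

Definition omega : T -> L := tensor_lift ht lift_bar_bilinear lift_bar_central.

Lemma omega_hom : is_hom omega.
Proof. apply tensor_lift_spec. Qed.

Lemma omega_central u : central (omega u).
Proof. apply tensor_lift_spec. Qed.

Lemma omega_barq x y : omega (t (r (p (q1 x))) (r (p (q1 y)))) = q2 (lift x y).
Proof.
  transitivity (lift_bar (barq x) (barq y)); [apply (tensor_lift_spec _ _ _) | apply lift_barE].
Qed.

Definition actC : C0 X -> C -> C := quot_act barq_quotient (@act1 X).

Lemma actC_action : is_action actC.
Proof. apply quot_act_action; [apply act1_action | apply P2_comm_act]. Qed.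

Lemma actC_barq n x : actC n (barq x) = barq (act1 n x).
Proof. apply (quot_actE barq_quotient); [apply act1_action | apply P2_comm_act]. Qed.

Lemma actC_bar n m : actC n (bar m) = bar (actM n m).
Proof. destruct (quot_surj hq1 m) as [x <-]. rewrite actM_q1. apply actC_barq. Qed.

Definition actT (n : C0 X) : T -> T :=
  tensor_lift ht (bilinear_hom (proj1 (proj2 ht)) (act_hom actC_action n))
    (fun c c' => tensor_central ht (t (actC n c) (actC n c'))).

Lemma actT_hom n : is_hom (actT n).
Proof. apply tensor_lift_spec. Qed.

Lemma actT_t n c c' : actT n (t c c') = t (actC n c) (actC n c').
Proof. exact (proj1 (proj2 (tensor_lift_spec _ _ _)) c c'). Qed.

Lemma actT_action : is_action actT.
Proof.
  split; [|split]; [| | exact actT_hom].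
  - apply (tensor_hom_ext ht (g1 := actT 1) (g2 := fun u => u));
      [apply actT_hom | intros u v; reflexivity | intro; apply (tensor_central ht) ..|].
    intros c c'. rewrite actT_t, !(act_one actC_action). reflexivity.
  - intros n n'. apply (tensor_hom_ext ht (g1 := actT (n * n')) (g2 := fun u => actT n (actT n' u)));
      [apply actT_hom | apply hom_comp; apply actT_hom | intro; apply (tensor_central ht) ..|].
    intros c c'. rewrite !actT_t, !(act_comp actC_action). reflexivity.
Qed.

Lemma omega_equiv n u : omega (actT n u) = actL n (omega u).
Proof.
  apply (tensor_hom_ext ht (g1 := fun u => omega (actT n u)) (g2 := fun u => actL n (omega u))).
  - exact (hom_comp (actT_hom n) omega_hom).
  - exact (hom_comp omega_hom (act_hom actL_action n)).
  - intro; apply omega_central.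
  - intro; apply (act_central actL_action), omega_central.
  - intros c c'.
    destruct (quot_surj barq_quotient c) as [x <-], (quot_surj barq_quotient c') as [y <-].
    rewrite actT_t, !actC_barq. unfold barq, bar. rewrite !omega_barq, <- CM5, actL_q2.
    reflexivity.
Qed.

Lemma quotient_quadratic_module : is_quadratic_module dM actM delta actL p r t omega.
Proof.
  split; [exact quotient_nil2 |]. split; [exact hp |]. split; [exact hr |].
  split; [exact ht |].
  exists (fun u => delta (omega u)).
  split; [exact (hom_comp omega_hom delta_hom) |].
  split.
  { intros a b. destruct (quot_surj hq1 a) as [x <-], (quot_surj hq1 b) as [y <-].
    rewrite (omega_barq x y), delta_q2, d2_lift, peiffer_q1. reflexivity. }
  split; [exact delta_hom |]. split; [exact omega_hom |].
  split; [exact dM_delta |]. split; [reflexivity |]. split; [exact actL_action |].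
  split.
  { exists actC, actT. split; [exact actC_action |]. split; [exact actC_bar |].
    split; [exact actT_action |]. split; [exact actT_t |]. split; [exact omega_equiv |].
    intros n u. rewrite omega_equiv. apply delta_equiv. }
  split; [exact delta_equiv |].
  split.
  { intros a l. destruct (quot_surj hq1 a) as [x <-], (quot_surj hq2 l) as [l' <-].
    rewrite omega_hom, delta_q2, !omega_barq, dM_q1, actL_q2, <- !(quot_hom hq2), CM4, mulgVK.
    reflexivity. }
  intros l l'. destruct (quot_surj hq2 l) as [a <-], (quot_surj hq2 l') as [b <-].
  rewrite !delta_q2, omega_barq, CM2.
  apply (hom_comm (quot_hom hq2)).
Qed.

End Abelianization.
End Quotients.

Theorem proposition5p2 (X : two_crossed_module)
  (M L : group) (q1 : C1 X -> M) (q2 : C2 X -> L) :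
  is_quotient q1 (@P3_1 X) ->
  is_quotient q2 (@P3' X) ->
  (forall x, @P3_1 X x -> @d1 X x = 1) /\
  (forall x, @P3_1 X x <-> exists l, @P3' X l /\ @d2 X l = x) /\
  exists (d : M -> C0 X) (delta : L -> M)
         (actM : C0 X -> M -> M) (actL : C0 X -> L -> L),
    is_hom d /\ (forall x, d (q1 x) = @d1 X x) /\
    is_hom delta /\ (forall l, delta (q2 l) = q1 (@d2 X l)) /\
    (forall n x, actM n (q1 x) = q1 (@act1 X n x)) /\
    (forall n l, actL n (q2 l) = q2 (@act2 X n l)) /\
    forall (Mcr C T : group) (p : M -> Mcr) (r : Mcr -> C) (t : C -> C -> T),
      is_quotient p (P2 d actM) ->
      is_quotient r (gen (@commutators Mcr)) ->
      is_tensor_square t ->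
      exists omega : T -> L,
        is_hom omega /\
        (forall x y : C1 X, omega (t (r (p (q1 x))) (r (p (q1 y)))) = q2 (@lift X x y)) /\
        is_quadratic_module d actM delta actL p r t omega.
Proof.
  intros hq1 hq2.
  split; [exact (@P3_d1 X) |].
  split; [intro x; split; [apply P3_d2_image | intros [l [hl <-]]; exact (P3'_d2 hl)] |].
  exists (dM hq1), (delta q1 hq2), (actM hq1), (actL hq2).
  split; [apply dM_hom | split; [apply dM_q1 |]].
  split; [apply delta_hom; exact hq1 | split; [apply delta_q2; exact hq1 |]].
  split; [apply actM_q1 | split; [apply actL_q2 |]].
  intros Mcr C T p r t hp hr ht.
  exists (omega hq2 hp hr ht).
  split; [apply omega_hom | split; [apply omega_barq |]].
  apply quotient_quadratic_module.
Qed.
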